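(* Let $\mathcal T$ be a mesh of $\Omega$ as described in the context, with degrees $\mathbf p$. Then $\mathcal T$ is abstractly analysis-suitable (AAS) if and only if $\mathcal T$ is strongly dual-compatible (SDC).
   Context: Fix an integer $d\ge 2$, integers $N_1,\dots,N_d\ge 1$, polynomial degrees $\mathbf p=(p_1,\dots,p_d)\in\mathbb N^d$, and put $q_k=\lfloor (p_k+1)/2\rfloor$. Let $\Omega=\prod_{k=1}^d(0,N_k)$ and let $\mathrm{AR}=\prod_{k=1}^d[q_k,N_k-q_k]$ be the active region. A mesh $\mathcal T$ is a finite family of pairwise disjoint sets $E=E_1\times\cdots\times E_d$ (entities) whose union is $\overline\Omega$, where each $E_k$ is either a singleton $\{n\}$ with $n\in\{0,\dots,N_k\}$ or an open interval $(a,b)$ with integers $0\le a<b\le N_k$; entities all of whose components are open intervals are cells. Only meshes arising as follows are considered: start from a tensor-product mesh given by integer grids $0=g^k_0<\dots<g^k_{M_k}=N_k$ (entities: all products of grid points $\{g^k_r\}$ and open grid intervals $(g^k_r,g^k_{r+1})$), each grid containing $0,\dots,q_k$ and $N_k-q_k,\dots,N_k$, and apply finitely many subdivision steps. A subdivision step $\mathrm{subdiv}(\mathcal T,Q,j)$, for a cell $Q\subset\mathrm{AR}$ and direction $j$ such that $m=\frac12(\inf Q_j+\sup Q_j)$ is an integer, is: let $D=\overline Q$; for every $\ell\neq j$, if $\min D_\ell=q_\ell$ replace $D_\ell$ by $D_\ell\cup[0,q_\ell]$, and if $\max D_\ell=N_\ell-q_\ell$ replace $D_\ell$ by $D_\ell\cup[N_\ell-q_\ell,N_\ell]$;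 then replace every entity $E\subset D$ with $E_j=Q_j$ by the three entities obtained from $E$ by replacing its $j$-th component by $(\inf Q_j,m)$, $\{m\}$, $(m,\sup Q_j)$ respectively. For a product set $E$, a direction $j$ and an integer $n$, $P_{j,n}(E)$ is $E$ with its $j$-th component replaced by $\{n\}$. The slice is $S_j(n)=\{x\in\overline\Omega: x_j=n\}$. The $j$-orthogonal skeleton is the closed set $\mathrm{Sk}_j=\bigcup_{Q\text{ cell}}\{x\in\overline Q: x_j\in\{\inf Q_j,\sup Q_j\}\}$. Anchors: let $\kappa=\{\ell: p_\ell\text{ odd}\}$. For a cell $Q$ consider the sets $A=A_1\times\dots\times A_d$ with $A_\ell=\{n_\ell\}$, $n_\ell\in\{\inf Q_\ell,\sup Q_\ell\}$, for $\ell\in\kappa$ and $A_\ell=Q_\ell$ for $\ell\notin\kappa$; the set $\mathcal A$ of anchors consists of all such sets (over all cells) that are contained in $\mathrm{AR}$. For a product set $E$ and direction $j$, the global knot vector $\Xi^j_E$ is the increasing sequence of all integers $n$ with $P_{j,n}(E)\subseteq \mathrm{Sk}_j$. For an anchor $A$, the local knot vector $v^j_A=(\ell_0,\dots,\ell_{p_j+1})$ consists of $p_j+2$ consecutive entries of $\Xi^j_A$ with $\ell_{\lfloor (p_j+1)/2\rfloor}=\inf A_j$. Knot vectors are ordered lists; ''$n\in v$'' means $n$ is an entry of $v$; $\mathrm{conv}\,v$ is the closed interval from the first to the last entry. The index support of the T-spline $B_A$ of $A$ is $\mathrm{supp}_\Omega B_A=\prod_{k=1}^d\mathrm{conv}\,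 v^k_A$. Abstract T-junction extensions: for $j\in\{1,\dots,d\}$, $n\in\{0,\dots,N_j\}$, $\mathrm{ATJ}_j(n)=S_j(n)\cap\bigcup_{A\in\mathcal A,\, n\in\Xi^j_A}\mathrm{supp}_\Omega B_A\cap\bigcup_{A\in\mathcal A,\, n\notin\Xi^j_A}\mathrm{supp}_\Omega B_A$. The mesh is AAS if $\mathrm{ATJ}_i(n)\cap\mathrm{ATJ}_j(m)=\emptyset$ for all $i\ne j$ and all $n\in\{0,\dots,N_i\}$, $m\in\{0,\dots,N_j\}$. Overlap: two non-decreasing finite sequences $\Xi^{(1)}=(\xi^{(1)}_1,\dots,\xi^{(1)}_{n_1})$, $\Xi^{(2)}=(\xi^{(2)}_1,\dots,\xi^{(2)}_{n_2})$ overlap, written $\Xi^{(1)}\bowtie\Xi^{(2)}$, if there is a non-decreasing sequence $(\xi_1,\dots,\xi_n)$ with $n\ge\max(n_1,n_2)$ and integers $k^{(1)},k^{(2)}\ge 0$ with $\xi^{(1)}_r=\xi_{r+k^{(1)}}$ for $r=1,\dots,n_1$ and $\xi^{(2)}_r=\xi_{r+k^{(2)}}$ for $r=1,\dots,n_2$. The mesh is SDC if for any two distinct anchors $A^{(1)}\ne A^{(2)}$, either $\mathrm{supp}_\Omega B_{A^{(1)}}\cap\mathrm{supp}_\Omega B_{A^{(2)}}=\emptyset$ or $v^k_{A^{(1)}}\bowtie v^k_{A^{(2)}}$ holds for at least $d-1$ directions $k$. *)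

From Stdlib Require Import ZArith Reals.
From mathcomp Require Import all_boot.

Set Implicit Arguments.
Unset Strict Implicit.
Unset Printing Implicit Defensive.

Inductive comp : Type := Pt (n : Z) | Iv (a b : Z).

Definition cinf (c : comp) : Z := match c with Pt n => n | Iv a _ => a end.
Definition csup (c : comp) : Z := match c with Pt n => n | Iv _ b => b end.

Definition compS (c : comp) (x : R) : Prop :=
  match c with Pt n => x = IZR n | Iv a b => (Rlt (IZR a) (x) /\ Rlt (x) (IZR b)) end.
Definition compCl (c : comp) (x : R) : Prop :=
  match c with Pt n => x = IZR n | Iv a b => (Rle (IZR a) (x) /\ Rle (x) (IZR b)) end.

Section Defs.
Variable d : nat.

Definition point := 'I_d -> R.
Definition entity := 'I_d -> comp.
Definition mesh := entity -> Prop.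

Definition pset_sub (P Q : point -> Prop) : Prop := forall x, P x -> Q x.

Definition entS (E : entity) (x : point) : Prop := forall k, compS (E k) (x k).
Definition entCl (E : entity) (x : point) : Prop := forall k, compCl (E k) (x k).

Definition is_cell (E : entity) : Prop := forall k, exists a b, E k = Iv a b.

Variables (N : 'I_d -> Z) (p : 'I_d -> nat).

Definition qn (k : 'I_d) : nat := (p k + 1) %/ 2.
Definition qz (k : 'I_d) : Z := Z.of_nat (qn k).

Definition OmegaCl (x : point) : Prop :=
  forall k, (Rle (0) (x k) /\ Rle (x k) (IZR (N k))).
Definition AR (x : point) : Prop :=
  forall k, (Rle (IZR (qz k)) (x k) /\ Rle (x k) (IZR (N k - qz k))).

Definition grid_ok (G : 'I_d -> Z -> Prop) : Prop :=
  forall k,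
    (forall n, G k n -> ((0 <= n)%Z /\ (n <= N k)%Z)) /\ G k 0%Z /\ G k (N k) /\
    (forall n, ((0 <= n)%Z /\ (n <= qz k)%Z) -> G k n) /\
    (forall n, ((N k - qz k <= n)%Z /\ (n <= N k)%Z) -> G k n).

Definition tensor_mesh (G : 'I_d -> Z -> Prop) : mesh := fun E =>
  forall k, match E k with
            | Pt n => G k n
            | Iv a b => G k a /\ G k b /\ (a < b)%Z /\
                        (forall n, ((a < n)%Z /\ (n < b)%Z) -> ~ G k n)
            end.

Definition subdivD (Q : entity) (j : 'I_d) (x : point) : Prop :=
  forall l, if l == j then compCl (Q j) (x j)
            else compCl (Q l) (x l)
                 \/ (cinf (Q l) = qz l /\ (Rle (0) (x l) /\ Rle (x l) (IZR (qz l))))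
                 \/ (csup (Q l) = (N l - qz l)%Z /\
                     (Rle (IZR (N l - qz l)) (x l) /\ Rle (x l) (IZR (N l)))).

Definition subdiv (T : mesh) (Q : entity) (j : 'I_d) : mesh := fun E' =>
  let a := cinf (Q j) in let b := csup (Q j) in let m := ((a + b) / 2)%Z in
  (T E' /\ ~ (pset_sub (entS E') (subdivD Q j) /\ E' j = Q j)) \/
  (exists E, T E /\ pset_sub (entS E) (subdivD Q j) /\ E j = Q j /\
     (forall k, k != j -> E' k = E k) /\
     (E' j = Iv a m \/ E' j = Pt m \/ E' j = Iv m b)).

Inductive admissible : mesh -> Prop :=
| adm_tensor G : grid_ok G -> admissible (tensor_mesh G)
| adm_subdiv T Q j :
    admissible T -> T Q -> is_cell Q -> pset_sub (entS Q) AR ->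
    Z.even (cinf (Q j) + csup (Q j)) = true ->
    admissible (subdiv T Q j).

Variable T : mesh.

Definition Sk (j : 'I_d) (x : point) : Prop :=
  exists Q, T Q /\ is_cell Q /\ entCl Q x /\
            (x j = IZR (cinf (Q j)) \/ x j = IZR (csup (Q j))).

Definition is_anchor (A : entity) : Prop :=
  (exists Q, T Q /\ is_cell Q /\
     forall l, if odd (p l) then A l = Pt (cinf (Q l)) \/ A l = Pt (csup (Q l))
               else A l = Q l) /\
  pset_sub (entS A) AR.

Definition Pjn (E : entity) (j : 'I_d) (n : Z) : entity :=
  fun k => if k == j then Pt n else E k.

(* n is an entry of the global knot vector Xi^j_E *)
Definition inXi (j : 'I_d) (E : entity) (n : Z) : Prop :=
  pset_sub (entS (Pjn E j n)) (Sk j).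

(* v is the local knot vector v^j_A: p_j+2 consecutive entries of Xi^j_A
   with entry number floor((p_j+1)/2) (0-based) equal to inf A_j *)
Definition lkv (j : 'I_d) (A : entity) (v : seq Z) : Prop :=
  size v = (p j + 2)%nat /\
  (forall i, (i.+1 < size v)%nat -> (nth 0%Z v i < nth 0%Z v i.+1)%Z) /\
  (forall i, (i < size v)%nat -> inXi j A (nth 0%Z v i)) /\
  (forall i, (i.+1 < size v)%nat -> forall n,
      ((nth 0%Z v i < n)%Z /\ (n < nth 0%Z v i.+1)%Z) -> ~ inXi j A n) /\
  nth 0%Z v (qn j) = cinf (A j).

(* index support of B_A: product of the convex hulls of the local knot vectors *)
Definition supp (A : entity) (x : point) : Prop :=
  forall k, exists v, lkv k A v /\
    (Rle (IZR (nth 0%Z v 0)) (x k) /\ Rle (x k) (IZR (nth 0%Z v (size v).-1))).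

Definition ATJ (j : 'I_d) (n : Z) (x : point) : Prop :=
  (OmegaCl x /\ x j = IZR n) /\
  (exists A, is_anchor A /\ inXi j A n /\ supp A x) /\
  (exists A, is_anchor A /\ ~ inXi j A n /\ supp A x).

Definition AAS : Prop :=
  forall i j : 'I_d, i != j ->
  forall n m : Z, ((0 <= n)%Z /\ (n <= N i)%Z) -> ((0 <= m)%Z /\ (m <= N j)%Z) ->
  forall x, ~ (ATJ i n x /\ ATJ j m x).

End Defs.

Definition nondecr (s : seq Z) : Prop :=
  forall i, (i.+1 < size s)%nat -> (nth 0%Z s i <= nth 0%Z s i.+1)%Z.

Definition overlap (s1 s2 : seq Z) : Prop :=
  exists (xi : seq Z) (k1 k2 : nat),
    nondecr xi /\ (maxn (size s1) (size s2) <= size xi)%nat /\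
    (k1 + size s1 <= size xi)%nat /\ (k2 + size s2 <= size xi)%nat /\
    (forall r, (r < size s1)%nat -> nth 0%Z s1 r = nth 0%Z xi (r + k1)) /\
    (forall r, (r < size s2)%nat -> nth 0%Z s2 r = nth 0%Z xi (r + k2)).

Definition SDC (d : nat) (N : 'I_d -> Z) (p : 'I_d -> nat) (T : mesh d) : Prop :=
  forall A1 A2 : entity d,
    is_anchor N p T A1 -> is_anchor N p T A2 -> (exists k, A1 k <> A2 k) ->
    (~ exists x, supp p T A1 x /\ supp p T A2 x) \/
    (exists S : {set 'I_d}, (d - 1 <= #|S|)%nat /\
       forall k, k \in S -> exists v1 v2,
         lkv p T k A1 v1 /\ lkv p T k A2 v2 /\ overlap v1 v2).

From Pilot Require Import Defs.
From Stdlib Require Import ZArith Reals Lia Lra Classical FunctionalExtensionality.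
From mathcomp Require Import all_boot zify ssrZ.

(* Both conditions compare, at a point x common to two supports, whether an
   integer lies in the global knot vectors Xi^k of two anchors.  Inside
   conv v^k_A an integer is an entry of v^k_A iff it lies in Xi^k_A, and two
   strictly increasing sequences of equal length with intersecting hulls
   overlap iff they have the same entries on the intersection of their hulls.
   So v^k_A and v^k_B fail to overlap exactly when some n in both hulls lies in
   Xi^k of one anchor only, and then the common support point, moved to
   x_k = n, lies in ATJ_k(n).  Two such directions i <> j produce a point of
   ATJ_i(n) ∩ ATJ_j(m), which gives AAS => SDC.  Conversely, among the four
   anchors witnessing x in ATJ_i(n) ∩ ATJ_j(m) there are always two that
   disagree both at x_i and at x_j; SDC forbids this, since such a pair must
   overlap in one of the directions i, j.  Admissibility is only used to keep
   every knot in [0, N_k], so that these points lie in the closure of Omega. *)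

Set Implicit Arguments.
Unset Strict Implicit.
Unset Printing Implicit Defensive.

Local Notation "v `_ i" := (nth 0%Z v i).

(** * Strictly increasing knot sequences and their overlap *)

Definition in_conv (v : seq Z) (n : Z) : Prop := (v`_0 <= n <= v`_(size v).-1)%Z.

Definition agree_on_conv (v w : seq Z) : Prop :=
  forall n, in_conv v n -> in_conv w n -> (n \in v) = (n \in w).

Lemma agree_on_conv_sym v w : agree_on_conv v w -> agree_on_conv w v.
Proof. by move=> ag n nw nv; rewrite ag. Qed.

(* [nthP] would state the equation over the eqType carrier of [Z], which
   [lia] does not identify with [Z]. *)
Lemma nthZP (v : seq Z) n :
  reflect (exists2 i, (i < size v)%N & v`_i = n) (n \in v).
Proof. exact: nthP. Qed.

Lemma Zltb_trans : transitive Z.ltb.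
Proof. by move=> b a c; lia. Qed.

Lemma Zleb_trans : transitive Z.leb.
Proof. by move=> b a c; lia. Qed.

Lemma Zleb_refl : reflexive Z.leb.
Proof. by move=> a; lia. Qed.

Section IncreasingSeq.
Variable v : seq Z.
Hypothesis sv : sorted Z.ltb v.

Lemma sorted_Zltb_nth i j : (i < j)%N -> (j < size v)%N -> (v`_i < v`_j)%Z.
Proof.
move=> ij js; apply/Z.ltb_lt/(sorted_ltn_nth Zltb_trans) => //.
by rewrite inE (ltn_trans ij js).
Qed.

Lemma sorted_Zltb_leq_nth i j : (i <= j)%N -> (j < size v)%N -> (v`_i <= v`_j)%Z.
Proof.
by rewrite leq_eqVlt => /predU1P [-> | ij js]; [lia | have := sorted_Zltb_nth ij js; lia].
Qed.

Lemma nth_in_conv i : (i < size v)%N -> in_conv v v`_i.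
Proof.
move=> iv; have v0 : (0 < size v)%N by apply: leq_ltn_trans iv.
split; apply: sorted_Zltb_leq_nth => //; last by rewrite prednK.
by rewrite -ltnS prednK.
Qed.

Lemma mem_in_conv n : n \in v -> in_conv v n.
Proof. by case/nthZP => r rv <-; apply: nth_in_conv. Qed.

Lemma gap_notin r n : (r.+1 < size v)%N -> (v`_r < n < v`_r.+1)%Z -> n \notin v.
Proof.
move=> rv lt_n; apply/negP => /nthZP [s sv' vs]; subst n.
case: (leqP s r) => sr.
  by have := sorted_Zltb_leq_nth sr (ltnW rv); lia.
by have := sorted_Zltb_leq_nth sr sv'; lia.
Qed.

Lemma notin_gap n : (0 < size v)%N -> in_conv v n -> n \notin v ->
  exists2 r, (r.+1 < size v)%N & (v`_r < n < v`_r.+1)%Z.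
Proof.
move=> v0 [lo hi] nv.
have has_n : has (Z.leb n) v.
  by apply/(has_nthP 0%Z); exists (size v).-1; [rewrite prednK | lia].
set r := find (Z.leb n) v.
have rv : (r < size v)%N by rewrite -has_find.
have le_n : (n <= v`_r)%Z by apply/Z.leb_le/nth_find.
have ne_n : v`_r <> n by move=> E; rewrite -E mem_nth in nv.
have r0 : (0 < r)%N.
  by rewrite lt0n; apply/eqP => E; rewrite E in le_n ne_n; lia.
exists r.-1; rewrite prednK //.
have := before_find 0%Z (_ : r.-1 < r)%N; rewrite ltn_predL => /(_ r0); lia.
Qed.

End IncreasingSeq.

Lemma agree_gap_notin v w j (n : Z) : sorted Z.ltb v -> sorted Z.ltb w ->
  agree_on_conv v w -> n \in v -> (j.+1 < size w)%N -> ~ (w`_j < n < w`_j.+1)%Z.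
Proof.
move=> sv sw ag nv jw lt_n.
have nw : in_conv w n.
  by have := nth_in_conv sw (ltnW jw); have := nth_in_conv sw jw; rewrite /in_conv; lia.
have := gap_notin sw jw lt_n; rewrite -ag ?nv //; exact: mem_in_conv.
Qed.

Section Agreement.
Variables v w : seq Z.
Hypotheses (sv : sorted Z.ltb v) (sw : sorted Z.ltb w) (ag : agree_on_conv v w).

Lemma agree_next i j : (i.+1 < size v)%N -> (j.+1 < size w)%N ->
  v`_i = w`_j -> v`_i.+1 = w`_j.+1.
Proof.
move=> iv jw eq_ij.
have vi1 : v`_i.+1 \in v by rewrite mem_nth.
have wj1 : w`_j.+1 \in w by rewrite mem_nth.
have := sorted_Zltb_nth sv (ltnSn i) iv; have := sorted_Zltb_nth sw (ltnSn j) jw.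
case: (Z.lt_total v`_i.+1 w`_j.+1) => [lt | [// | gt]] ltw ltv; exfalso.
  by apply: (agree_gap_notin sv sw ag vi1 jw); lia.
by apply: (agree_gap_notin sw sv (agree_on_conv_sym ag) wj1 iv); lia.
Qed.

Lemma agree_prev i j : (i.+1 < size v)%N -> (j.+1 < size w)%N ->
  v`_i.+1 = w`_j.+1 -> v`_i = w`_j.
Proof.
move=> iv jw eq_ij.
have vi : v`_i \in v by rewrite mem_nth // ltnW.
have wj : w`_j \in w by rewrite mem_nth // ltnW.
have := sorted_Zltb_nth sv (ltnSn i) iv; have := sorted_Zltb_nth sw (ltnSn j) jw.
case: (Z.lt_total v`_i w`_j) => [lt | [// | gt]] ltw ltv; exfalso.
  by apply: (agree_gap_notin sw sv (agree_on_conv_sym ag) wj iv); lia.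
by apply: (agree_gap_notin sv sw ag vi jw); lia.
Qed.

Lemma agree_from i j : v`_i = w`_j -> forall r,
  (i + r < size v)%N -> (j + r < size w)%N -> v`_(i + r) = w`_(j + r).
Proof.
move=> eq_ij; elim=> [|r IH] ir jr; first by rewrite !addn0.
by rewrite !addnS; apply: agree_next; [lia | lia | apply: IH; lia].
Qed.

Lemma agree_upto i j : (i < size v)%N -> (j < size w)%N -> v`_i = w`_j -> forall r,
  (r <= i)%N -> (r <= j)%N -> v`_(i - r) = w`_(j - r).
Proof.
move=> iv jw eq_ij; elim=> [|r IH] ri rj; first by rewrite !subn0.
apply: agree_prev; [lia | lia |].
have [<- <-] : (i - r = (i - r.+1).+1 /\ j - r = (j - r.+1).+1)%N by lia.
by apply: IH; lia.
Qed.

Lemma agree_eq q : size v = size w -> (q < size v)%N -> v`_q = w`_q -> v = w.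
Proof.
move=> vw qv eq_q; apply: (@eq_from_nth _ 0%Z) => // r rv.
case: (leqP q r) => qr.
  by rewrite -(subnKC qr); apply: agree_from; rewrite ?subnKC -?vw.
have qw : (q < size w)%N by rewrite -vw.
by rewrite -(subKn (ltnW qr)); apply: agree_upto; rewrite ?leq_subr.
Qed.

End Agreement.

Lemma nondecr_leq_nth s i j : nondecr s -> (i <= j)%N -> (j < size s)%N -> (s`_i <= s`_j)%Z.
Proof.
move=> nd ij js; have ss : sorted Z.leb s by apply/(sortedP 0%Z) => k /nd; lia.
apply/Z.leb_le/(sorted_leq_nth Zleb_trans Zleb_refl) => //.
by rewrite inE (leq_ltn_trans ij js).
Qed.

Lemma overlap_sym v w : overlap v w -> overlap w v.
Proof.
case=> xi [k1 [k2 [nd [sz [s1 [s2 [e1 e2]]]]]]].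
by exists xi, k2, k1; rewrite maxnC.
Qed.

Lemma overlap_mem v w (n : Z) : overlap v w -> (0 < size w)%N ->
  n \in v -> in_conv w n -> n \in w.
Proof.
case=> xi [k1 [k2 [nd [_ [s1 [s2 [e1 e2]]]]]]] w0 /nthZP [s sv <-] [lo hi].
rewrite e1 // in lo hi *; rewrite e2 // in lo; rewrite e2 ?prednK // in hi.
have sx : (s + k1 < size xi)%N by lia.
apply/nthZP; case: (ltnP (s + k1) k2) => [lt | ge].
  exists 0%N => //; rewrite e2 //.
  by have := nondecr_leq_nth nd (ltnW lt) (_ : k2 < size xi)%N; rewrite add0n in lo *; lia.
case: (ltnP ((size w).-1 + k2) (s + k1)) => [gt | le].
  exists (size w).-1; first by rewrite prednK.
  by rewrite e2 ?prednK //; have := nondecr_leq_nth nd (ltnW gt) sx; lia.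
by exists (s + k1 - k2)%N; [lia | rewrite e2 ?subnK //; lia].
Qed.

Lemma overlap_agree v w : overlap v w -> (0 < size v)%N -> (0 < size w)%N ->
  agree_on_conv v w.
Proof.
move=> ov v0 w0 n nv nw; apply/idP/idP => nin.
  exact: overlap_mem ov w0 nin nw.
exact: overlap_mem (overlap_sym ov) v0 nin nv.
Qed.

Lemma overlap_of_shift v w t : sorted Z.ltb v -> sorted Z.ltb w -> size v = size w ->
  (t < size v)%N -> (forall r, (t + r < size v)%N -> w`_r = v`_(t + r)) -> overlap v w.
Proof.
move=> sv sw vw tv shift.
set xi := take t v ++ w.
have xiE i : xi`_i = if (i < t)%N then v`_i else w`_(i - t).
  by rewrite nth_cat size_take tv; case: ifP => // it; rewrite nth_take.
have sz : size xi = (t + size v)%N by rewrite size_cat size_take tv vw.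
exists xi, 0%N, t; split; [|split; [|split; [|split; [|split]]]].
- move=> i; rewrite sz !xiE => isz.
  case: (ltnP i.+1 t) => [i1t | ti1].
    by rewrite (ltnW i1t); have := sorted_Zltb_nth sv (ltnSn i) (ltn_trans i1t tv); lia.
  case: (ltnP i t) => [it | ti].
    have -> : (i.+1 - t = 0)%N by lia.
    rewrite shift ?addn0 //; have := sorted_Zltb_nth sv it tv; lia.
  have -> : (i.+1 - t = (i - t).+1)%N by lia.
  by have := sorted_Zltb_nth sw (ltnSn (i - t)) (_ : (i - t).+1 < size w)%N; lia.
- by rewrite sz -vw maxnn leq_addl.
- by rewrite sz add0n leq_addl.
- by rewrite sz -vw.
- move=> r rv; rewrite addn0 xiE; case: ltnP => // tr.
  by rewrite shift subnKC.
- by move=> r rw; rewrite xiE ltnNge leq_addl /= addnK.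
Qed.

Lemma agree_overlap v w : sorted Z.ltb v -> sorted Z.ltb w -> size v = size w ->
  (0 < size v)%N -> (v`_0 <= w`_(size w).-1)%Z -> (w`_0 <= v`_(size v).-1)%Z ->
  agree_on_conv v w -> overlap v w.
Proof.
wlog le0 : v w / (v`_0 <= w`_0)%Z => [hwlog | sv sw vw v0 _ hi ag].
  move=> sv sw vw v0 lo hi ag; case: (Z.le_ge_cases v`_0 w`_0) => [le | ge].
    exact: hwlog.
  by apply/overlap_sym/hwlog => //; try lia; exact: agree_on_conv_sym.
have w0 : (0 < size w)%N by rewrite -vw.
have : w`_0 \in v by rewrite ag ?mem_nth //; exact: nth_in_conv.
case/nthZP => t tv vt.
apply: (overlap_of_shift sv sw vw tv) => r tr.
by rewrite (agree_from sv sw ag vt) // add0n -vw; lia.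
Qed.

(** * Local knot vectors and supports *)

Definition knots_differ d (T : mesh d) k (A B : entity d) (n : Z) : Prop :=
  ~ (inXi T k A n <-> inXi T k B n).

Definition move_coord d (x : point d) (k : 'I_d) (r : R) : point d :=
  fun l => if l == k then r else x l.

Section KnotVectors.
Variables (d : nat) (p : 'I_d -> nat) (T : mesh d).

Lemma lkv_sorted j A v : lkv p T j A v -> sorted Z.ltb v.
Proof. by case=> _ [inc _]; apply/(sortedP 0%Z) => i /inc; lia. Qed.

Lemma lkv_size_gt0 j A v : lkv p T j A v -> (0 < size v)%N.
Proof. by case=> ->; rewrite addn2. Qed.

Lemma lkv_mem j A v n : lkv p T j A v -> in_conv v n -> n \in v <-> inXi T j A n.
Proof.
move=> lv nv; have [_ [_ [knots [gap _]]]] := lv.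
split; first by case/nthZP => r rv <-; apply: knots.
move=> Xn; case: (boolP (n \in v)) => // nin; exfalso.
have [r rv lt_n] := notin_gap (lkv_sorted lv) (lkv_size_gt0 lv) nv nin.
exact: gap r rv n lt_n Xn.
Qed.

Lemma lkv_agree j A B v w : lkv p T j A v -> lkv p T j B w ->
  agree_on_conv v w <->
  (forall n, in_conv v n -> in_conv w n -> (inXi T j A n <-> inXi T j B n)).
Proof.
move=> lv lw; split=> ag n nv nw.
  by have := lkv_mem lv nv; have := lkv_mem lw nw; rewrite (ag n nv nw); tauto.
apply/idP/idP => nin.
  by apply/(lkv_mem lw nw)/(ag n nv nw)/(lkv_mem lv nv).
by apply/(lkv_mem lv nv)/(ag n nv nw)/(lkv_mem lw nw).
Qed.

Lemma lkv_uniq j A v w : lkv p T j A v -> lkv p T j A w -> v = w.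
Proof.
move=> lv lw; have [sv [_ [_ [_ qv]]]] := lv; have [sw [_ [_ [_ qw]]]] := lw.
have ag : agree_on_conv v w by apply/(lkv_agree lv lw).
apply: (agree_eq (lkv_sorted lv) (lkv_sorted lw) ag (q := qn p j)); first by rewrite sv sw.
  by rewrite sv /qn; apply: leq_ltn_trans (leq_div _ _) _; lia.
by rewrite qv qw.
Qed.

Lemma supp_conv A x k v : supp p T A x -> lkv p T k A v ->
  Rle (IZR v`_0) (x k) /\ Rle (x k) (IZR v`_(size v).-1).
Proof. by move=> xA lv; have [w [lw cw]] := xA k; rewrite (lkv_uniq lv lw). Qed.

Lemma supp_in_conv A x k v n : supp p T A x -> lkv p T k A v -> x k = IZR n -> in_conv v n.
Proof. by move=> xA lv xk; have := supp_conv xA lv; rewrite xk => -[/le_IZR ? /le_IZR ?]. Qed.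

Lemma supp_move_coord A x k v n : supp p T A x -> lkv p T k A v -> in_conv v n ->
  supp p T A (move_coord x k (IZR n)).
Proof.
move=> xA lv [lo hi] l; rewrite /move_coord; case: eqP => [-> | _]; last exact: xA.
by exists v; split => //; split; apply: IZR_le.
Qed.

Lemma overlap_knots_agree A B k v w x n : lkv p T k A v -> lkv p T k B w -> overlap v w ->
  supp p T A x -> supp p T B x -> x k = IZR n -> inXi T k A n <-> inXi T k B n.
Proof.
move=> lv lw ov xA xB xk.
have ag := overlap_agree ov (lkv_size_gt0 lv) (lkv_size_gt0 lw).
move/(lkv_agree lv lw): ag; apply.
  exact: supp_in_conv xA lv xk.
exact: supp_in_conv xB lw xk.
Qed.

Lemma not_overlap_knots_differ A B y k : supp p T A y -> supp p T B y ->
  ~ (exists v w, lkv p T k A v /\ lkv p T k B w /\ overlap v w) ->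
  exists n, [/\ supp p T A (move_coord y k (IZR n)), supp p T B (move_coord y k (IZR n))
              & knots_differ T k A B n].
Proof.
move=> yA yB nov; have [v [lv _]] := yA k; have [w [lw _]] := yB k.
have cv := supp_conv yA lv; have cw := supp_conv yB lw.
have nag : ~ agree_on_conv v w.
  move=> ag; apply: nov; exists v, w; do 2!split=> //.
  apply: agree_overlap (lkv_sorted lv) (lkv_sorted lw) _ (lkv_size_gt0 lv) _ _ ag.
  - by case: lv => ->; case: lw => ->.
  - by apply: le_IZR; lra.
  - by apply: le_IZR; lra.
have [n [nv nw diff]] : exists n, [/\ in_conv v n, in_conv w n & knots_differ T k A B n].
  apply: NNPP => none; apply/nag/(lkv_agree lv lw) => n nv nw.
  by apply: NNPP => diff; apply: none; exists n.
by exists n; split; [exact: supp_move_coord yA lv nv | exact: supp_move_coord yB lw nw |].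
Qed.

End KnotVectors.

(** * AAS and SDC *)

Definition comp_within (M : Z) (c : Defs.comp) : Prop :=
  match c with Pt n => (0 <= n <= M)%Z | Iv a b => (0 <= a /\ a < b <= M)%Z end.

Definition entities_within d (N : 'I_d -> Z) (T : mesh d) : Prop :=
  forall E, T E -> forall k, comp_within (N k) (E k).

Lemma midpoint_between a b : (a < b)%Z -> Z.even (a + b) -> (a < (a + b) / 2 < b)%Z.
Proof. by move=> ab /Z.even_spec [c abc]; rewrite abc Z.mul_comm Z.div_mul //; lia. Qed.

Lemma admissible_within d N p (T : mesh d) : admissible N p T -> entities_within N T.
Proof.
elim=> [G HG | T0 Q j _ IH TQ cellQ _ ev].
  move=> E TE k; have [Gb _] := HG k; have := TE k.
  by case: (E k) => [n /Gb | a b [/Gb ? [/Gb ? [? _]]]] /=; lia.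
move=> E' [[TE' _] | [E [TE [_ [_ [Eeq Ej]]]]]]; first exact: IH.
move=> k; case: (eqVneq k j) => [-> | kj]; last by rewrite Eeq //; exact: IH.
have [a [b Qj]] := cellQ j; have := IH _ TQ j; rewrite Qj /= in ev Ej *.
by have := midpoint_between _ ev; case: Ej => [-> | [-> | ->]] /=; lia.
Qed.

Section AAStoSDC.
Variables (d : nat) (N : 'I_d -> Z) (p : 'I_d -> nat) (T : mesh d).
Hypothesis HT : entities_within N T.

Lemma Sk_OmegaCl j x : Sk T j x -> OmegaCl N x.
Proof.
case=> Q [TQ [_ [xQ _]]] k; have := HT TQ k; have := xQ k.
case: (Q k) => [c | a b] /=.
  by move=> -> [c0 cN]; split; apply: IZR_le.
move=> [xa xb] [a0 [_ bN]]; have := IZR_le _ _ a0; have := IZR_le _ _ bN; lra.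
Qed.

Lemma anchor_comp A l : is_anchor N p T A ->
  (exists c, A l = Pt c) \/ (exists a b, A l = Iv a b /\ (a < b)%Z).
Proof.
case=> [[Q [TQ [cellQ HA]]] _]; have := HA l; case: (odd (p l)).
  by case=> ->; left; eexists.
move=> ->; have [a [b Ql]] := cellQ l; right; exists a, b; split=> //.
by have := HT TQ l; rewrite Ql /=; lia.
Qed.

(* Without an inhabitant of P_{j,n}(A), [inXi] would hold vacuously. *)
Lemma Pjn_inhabited A j n : is_anchor N p T A -> exists x, entS (Pjn A j n) x.
Proof.
move=> HA; exists (fun k => if k == j then IZR n else
  match A k with Pt c => IZR c | Iv a b => Rdiv (Rplus (IZR a) (IZR b)) 2 end).
move=> k; rewrite /Pjn; case: eqP => // _.
case: (anchor_comp k HA) => [[c ->] | [a [b [-> ab]]]] //=.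
have := IZR_lt _ _ ab; lra.
Qed.

Lemma inXi_bounds A j n : is_anchor N p T A -> inXi T j A n -> (0 <= n <= N j)%Z.
Proof.
move=> HA Xn; have [x xP] := Pjn_inhabited j n HA.
have := Sk_OmegaCl (Xn x xP) j; have := xP j; rewrite /Pjn eqxx /= => ->.
by case=> /le_IZR ? /le_IZR ?.
Qed.

Lemma supp_OmegaCl A x : is_anchor N p T A -> supp p T A x -> OmegaCl N x.
Proof.
move=> HA xA k; have [v [lv [lo hi]]] := xA k; have [sz [_ [knots _]]] := lv.
have v_gt0 : (0 < size v)%N by rewrite sz addn2.
have [v0 _] := inXi_bounds HA (knots 0%N v_gt0).
have v_last : ((size v).-1 < size v)%N by rewrite ltn_predL.
have [_ vN] := inXi_bounds HA (knots _ v_last).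
by have := IZR_le _ _ v0; have := IZR_le _ _ vN; lra.
Qed.

Lemma ATJ_of_differ A B k n x : is_anchor N p T A -> is_anchor N p T B ->
  supp p T A x -> supp p T B x -> x k = IZR n -> knots_differ T k A B n -> ATJ N p T k n x.
Proof.
move=> hA hB xA xB xk diff; split; first by split=> //; exact: supp_OmegaCl hA xA.
red in diff; by case: (classic (inXi T k A n)) => XA; split;
  [exists A | exists B | exists B | exists A]; do !split=> //; tauto.
Qed.

Lemma AAS_no_double_differ A B i j n m x : AAS N p T -> i != j ->
  is_anchor N p T A -> is_anchor N p T B -> supp p T A x -> supp p T B x ->
  x i = IZR n -> x j = IZR m -> knots_differ T i A B n -> knots_differ T j A B m -> False.
Proof.
move=> aas ij hA hB xA xB xi xj di dj.
have [Xn Xm] : (0 <= n <= N i)%Z /\ (0 <= m <= N j)%Z.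
  have := supp_OmegaCl hA xA i; have := supp_OmegaCl hA xA j; rewrite xi xj.
  by case=> /le_IZR ? /le_IZR ? [/le_IZR ? /le_IZR ?].
apply: (aas i j ij n m Xn Xm x).
by split; [exact: ATJ_of_differ hA hB xA xB xi di | exact: ATJ_of_differ hA hB xA xB xj dj].
Qed.

Lemma AAS_SDC : AAS N p T -> SDC N p T.
Proof.
move=> aas A B hA hB _.
case: (classic (exists x, supp p T A x /\ supp p T B x)) => [[y [yA yB]] | disj]; last by left.
right; pose ov k := exists v w, lkv p T k A v /\ lkv p T k B w /\ overlap v w.
have not_two i j : i != j -> ~ ov i -> ~ ov j -> False.
  move=> ij ni nj; have [n [y'A y'B di]] := not_overlap_knots_differ yA yB ni.
  have [m [xA xB dj]] := not_overlap_knots_differ y'A y'B nj.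
  apply: (AAS_no_double_differ aas ij hA hB xA xB _ _ di dj).
    by rewrite /move_coord (negbTE ij) eqxx.
  by rewrite /move_coord eqxx.
case: (classic (exists i, ~ ov i)) => [[i ni] | all_ov].
  exists [set~ i]; split; first by rewrite cardsC1 card_ord subn1.
  move=> k; rewrite !inE => ki; apply: NNPP => nk; exact: not_two k i ki nk ni.
exists setT; split; first by rewrite cardsT card_ord leq_subr.
by move=> k _; apply: NNPP => nk; apply: all_ov; exists k.
Qed.

End AAStoSDC.

Lemma card_avoiding2 d (S : {set 'I_d}) i j : i != j -> i \notin S -> j \notin S ->
  (#|S| <= d - 2)%N.
Proof.
move=> ij iS jS; have : S \subset ~: [set i; j].
  apply/subsetP => k kS; rewrite !inE negb_or.
  by apply/andP; split; apply/eqP => eq_k; [move: iS | move: jS]; rewrite -eq_k kS.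
move/subset_leq_card; have := cardsC [set i; j]; rewrite cards2 ij card_ord; lia.
Qed.

Lemma complementary_pair (X : Type) (R P Q : X -> Prop) :
  (exists2 a, R a & P a) -> (exists2 a, R a & ~ P a) ->
  (exists2 a, R a & Q a) -> (exists2 a, R a & ~ Q a) ->
  exists a b, [/\ R a, R b, ~ (P a <-> P b) & ~ (Q a <-> Q b)].
Proof.
move=> [a Ra Pa] [b Rb nPb] [c Rc Qc] [e Re nQe].
case: (classic (Q a)) => Qa; case: (classic (Q b)) => Qb.
- by case: (classic (P e)) => Pe; [exists b, e | exists a, e]; split; tauto.
- by exists a, b; split; tauto.
- by exists a, b; split; tauto.
- by case: (classic (P c)) => Pc; [exists b, c | exists a, c]; split; tauto.
Qed.

Section SDCtoAAS.
Variables (d : nat) (N : 'I_d -> Z) (p : 'I_d -> nat) (T : mesh d).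

Lemma SDC_no_double_differ A B i j n m x : (2 <= d)%N -> SDC N p T -> i != j ->
  is_anchor N p T A -> is_anchor N p T B -> supp p T A x -> supp p T B x ->
  x i = IZR n -> x j = IZR m -> knots_differ T i A B n -> knots_differ T j A B m -> False.
Proof.
move=> hd sdc ij hA hB xA xB xi xj di dj.
have AB : exists k, A k <> B k.
  apply: NNPP => eqAB; apply: di.
  suff -> : A = B by [].
  by apply: functional_extensionality => k; apply: NNPP => ne; apply: eqAB; exists k.
case: (sdc A B hA hB AB) => [disj | [S [cardS ovS]]]; first by apply: disj; exists x.
have agree_in k c : k \in S -> x k = IZR c -> inXi T k A c <-> inXi T k B c.
  move=> kS xk; have [v [w [lv [lw ov]]]] := ovS k kS.
  exact: overlap_knots_agree lv lw ov xA xB xk.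
case: (boolP (i \in S)) => iS; first by apply: di; apply: agree_in iS xi.
case: (boolP (j \in S)) => jS; first by apply: dj; apply: agree_in jS xj.
by have := card_avoiding2 ij iS jS; lia.
Qed.

Lemma SDC_AAS : (2 <= d)%N -> SDC N p T -> AAS N p T.
Proof.
move=> hd sdc i j ij n m _ _ x [[[_ xi] [[A1 [a1 [X1 s1]]] [A2 [a2 [X2 s2]]]]]
                              [[_ xj] [[A3 [a3 [X3 s3]]] [A4 [a4 [X4 s4]]]]]].
have [A [B [[hA xA] [hB xB] di dj]]] :=
  @complementary_pair _ (fun A => is_anchor N p T A /\ supp p T A x)
    (fun A => inXi T i A n) (fun A => inXi T j A m)
    (ex_intro2 _ _ A1 (conj a1 s1) X1) (ex_intro2 _ _ A2 (conj a2 s2) X2)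
    (ex_intro2 _ _ A3 (conj a3 s3) X3) (ex_intro2 _ _ A4 (conj a4 s4) X4).
exact: SDC_no_double_differ hd sdc ij hA hB xA xB xi xj di dj.
Qed.

End SDCtoAAS.

Theorem theorem6p1 (d : nat) (hd : (2 <= d)%nat) (N : 'I_d -> Z)
  (hN : forall k, (1 <= N k)%Z) (p : 'I_d -> nat) (T : mesh d) :
  admissible N p T -> (AAS N p T <-> SDC N p T).
Proof.
move=> /admissible_within HT; split; [exact: AAS_SDC | exact: SDC_AAS].
Qed.
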